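(* Let $a,b>-1$, $n\ge2$, and $\lambda$ a partition with $\ell(\lambda)\le n$. In the expansion $$\mathfrak P_\lambda(x_1,\dots,x_{n-1},1;a,b)=\sum_{\nu:\ \ell(\nu)\le n-1}c_{\lambda\nu}\,\mathfrak P_\nu(x_1,\dots,x_{n-1};a,b)$$ all coefficients $c_{\lambda\nu}$ are nonnegative.
   Context: $\mathfrak p_l(x;a,b)$ ($l\ge0$) are the classical Jacobi polynomials orthogonal on $[-1,1]$ with weight $(1-x)^a(1+x)^b$, normalized by $\mathfrak p_l(x;a,b)=\frac{\Gamma(l+a+1)}{\Gamma(l+1)\Gamma(a+1)}{}_2F_1(-l,l+a+b+1;a+1;\frac{1-x}2)$. For $m\ge1$ and a partition $\nu$ with $\ell(\nu)\le m$, $\mathfrak P_\nu(x_1,\dots,x_m;a,b)=\det_{1\le i,j\le m}[\mathfrak p_{\nu_i+m-i}(x_j;a,b)]/\prod_{1\le i<j\le m}(x_i-x_j)$. These form a basis of symmetric polynomials in $x_1,\dots,x_m$, so the expansion exists and is unique. *)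

From mathcomp Require Import all_boot all_order all_algebra.
From mathcomp Require Import reals.
Set Implicit Arguments. Unset Strict Implicit. Unset Printing Implicit Defensive.
Import Order.TTheory GRing.Theory Num.Theory.
Local Open Scope ring_scope.

Definition poch (R : ringType) (x : R) (k : nat) : R :=
  \prod_(i < k) (x + i%:R).

(* Classical Jacobi polynomial p_l(x;a,b) =
   Gamma(l+a+1)/(Gamma(l+1)Gamma(a+1)) 2F1(-l, l+a+b+1; a+1; (1-x)/2),
   with Gamma(l+a+1)/Gamma(a+1) = (a+1)_l, Gamma(l+1) = l!, and the
   terminating 2F1 series written out (terms k > l vanish since (-l)_k = 0). *)
Definition jacobi (R : realType) (a b : R) (l : nat) (x : R) : R :=
  poch (a + 1) l / (l`!)%:R *
  \sum_(k < l.+1)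
     (poch (- (l%:R)) k * poch (l%:R + a + b + 1) k)
       / (poch (a + 1) k * (k`!)%:R) * ((1 - x) / 2) ^+ k.

(* A partition with at most m parts, padded with zeros to length m:
   nu = [nu_1; ...; nu_m] with nu_1 >= ... >= nu_m >= 0. *)
Definition is_partition (m : nat) (nu : seq nat) : bool :=
  (size nu == m) && sorted geq nu.

Definition multiJacobi (R : realType) (a b : R) (m : nat) (nu : seq nat)
    (x : nat -> R) : R :=
  \det (\matrix_(i < m, j < m) jacobi a b (nth 0%N nu i + (m - i.+1))%N (x j))
  / \prod_(i < m) \prod_(j < m | (i < j)%N) (x i - x j).

(* Write F_l = p_l / p_l(1) and L_i = lam_i + n - 1 - i. Everything rests on
   the Christoffel-Darboux identity at y = 1,
     F_(l+1) - F_l = (x - 1) u_l K_l,   K_l = sum_(k <= l) v_k F_k,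
   with u_l, v_k > 0. In det[p_(L_i)(x_j)] with x_(n-1) = 1, subtracting
   p_(L_i)(1) / p_(L_(i+1))(1) times row i+1 from row i clears the last column
   except for p_(L_(n-1))(1), and turns row i into
   p_(L_i)(1) (x_j - 1) sum_(L_(i+1) <= k < L_i) u_k K_k(x_j).
   The factors x_j - 1 cancel against the Vandermonde product, and
   multilinearity leaves a nonnegative combination of det[K_(f_i)(x_j)] over
   strictly decreasing f. Subtracting consecutive rows again, with
   K_(f_i) - K_(f_(i+1)) = sum_(f_(i+1) < k <= f_i) v_k F_k, gives a
   nonnegative combination of det[p_(g_i)(x_j)] over strictly decreasing g,
   and these are the P_nu with nu_i = g_i - (n - 2 - i). *)

From mathcomp Require Import all_boot all_order all_algebra.
From mathcomp Require Import reals.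
From mathcomp Require Import perm ring lra zify.
Set Implicit Arguments. Unset Strict Implicit. Unset Printing Implicit Defensive.
Import Order.TTheory GRing.Theory Num.Theory.
Local Open Scope ring_scope.

Section Pochhammer.
Variable R : nzRingType.

Lemma poch0 (x : R) : poch x 0 = 1.
Proof. by rewrite /poch big_ord0. Qed.

Lemma pochS (x : R) n : poch x n.+1 = poch x n * (x + n%:R).
Proof. by rewrite /poch big_ord_recr. Qed.

Lemma pochSl (x y : R) n : x + 1 = y -> poch x n.+1 = x * poch y n.
Proof.
move=> <-; rewrite /poch big_ord_recl addr0; congr (_ * _).
by apply: eq_bigr => i _; rewrite lift0 /= -addn1 natrD [_ + 1]addrC addrA.
Qed.

Lemma poch1 (x : R) : poch x 1 = x.
Proof. by rewrite pochS poch0 mul1r addr0. Qed.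

Lemma poch_Nnat (l k : nat) : (l < k)%N -> poch (- l%:R : R) k = 0.
Proof.
elim: k => // k IHk; rewrite ltnS leq_eqVlt pochS => /predU1P[->|/IHk->].
  by rewrite addNr mulr0.
by rewrite mul0r.
Qed.

End Pochhammer.

Lemma poch_gt0 (R : numDomainType) (x : R) n : 0 < x -> 0 < poch x n.
Proof. by move=> x0; apply: prodr_gt0 => i _; rewrite ltr_wpDr. Qed.

Lemma big_nat_ord_indicator (R : pzSemiRingType) lo hi K (F : nat -> R) :
  (hi <= K)%N ->
  \sum_(lo <= k < hi) F k = \sum_(k < K) ((lo <= k) && (k < hi))%N%:R * F k.
Proof.
move=> hiK; rewrite big_geq_mkord (big_ord_widen_cond K) // big_mkcond /=.
by apply: eq_bigr => k _; case: ifP; rewrite ?mul1r ?mul0r.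
Qed.

Lemma sum_group_by (R : pzSemiRingType) (T : eqType) (r : seq (R * T)) (g : T -> R) :
  \sum_(p <- r) p.1 * g p.2 =
  \sum_(t <- undup [seq p.2 | p <- r]) (\sum_(p <- r | p.2 == t) p.1) * g t.
Proof.
under [RHS]eq_bigr => t _ do rewrite mulr_suml.
rewrite (exchange_big_dep xpredT) //=; apply: eq_big_seq => p pr.
rewrite big_mkcond (bigD1_seq p.2) ?undup_uniq ?mem_undup ?map_f //= eqxx.
by rewrite big1 ?addr0 // => t; rewrite eq_sym => /negbTE ->.
Qed.

Section Determinants.
Variable R : comNzRingType.

Lemma det_mulmx_ffun m K (A : 'M[R]_(m, K)) (B : 'M[R]_(K, m)) :
  \det (A *m B) =
  \sum_(f : {ffun 'I_m -> 'I_K}) (\prod_i A i (f i)) * \det (rowsub f B).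
Proof.
rewrite /determinant (eq_bigr (fun s : 'S_m => \sum_(f : {ffun 'I_m -> 'I_K})
    (-1) ^+ s * \prod_i (A i (f i) * B (f i) (s i)))); last first.
  move=> s _; rewrite -mulr_sumr -(bigA_distr_bigA (fun i k => A i k * B k (s i))).
  by congr (_ * _); apply: eq_bigr => i _; rewrite mxE.
rewrite exchange_big /=; apply: eq_bigr => f _; rewrite mulr_sumr.
apply: eq_bigr => s _; rewrite big_split /= mulrCA; congr (_ * (_ * _)).
by apply: eq_bigr => i _; rewrite mxE.
Qed.

Lemma det_scale_rows m (c : 'I_m -> R) (A : 'M[R]_m) :
  \det (\matrix_(i, j) (c i * A i j)) = (\prod_i c i) * \det A.
Proof.
have -> : \matrix_(i, j) (c i * A i j) = diag_mx (\row_j c j) *m A.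
  by rewrite mul_diag_mx; apply/matrixP => i j; rewrite !mxE.
by rewrite det_mulmx det_diag; congr (_ * _); apply: eq_bigr => j _; rewrite mxE.
Qed.

Lemma det_scale_cols m (c : 'I_m -> R) (A : 'M[R]_m) :
  \det (\matrix_(i, j) (c j * A i j)) = (\prod_j c j) * \det A.
Proof.
rewrite -det_tr -[in RHS]det_tr -det_scale_rows; congr (\det _).
by apply/matrixP => i j; rewrite !mxE.
Qed.

Lemma det_sub_next_rows n (A : 'M[R]_n.+1) (c : nat -> R) :
  \det (\matrix_(i, j) (if (i.+1 < n.+1)%N then A i j - c i * A (inord i.+1) j
                        else A i j)) = \det A.
Proof.
pose N : 'M[R]_n.+1 :=
  \matrix_(i, k) (if (i.+1 < n.+1)%N then c i * (k == i.+1 :> nat)%:R else 0).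
have -> : \matrix_(i, j) (if (i.+1 < n.+1)%N then A i j - c i * A (inord i.+1) j
                        else A i j) = (1%:M - N) *m A.
  apply/matrixP => i j; rewrite mulmxBl mul1mx !mxE; case: ifP => hi.
    rewrite (bigD1 (inord i.+1)) //= big1 ?addr0 => [|k hk].
      by rewrite !mxE hi inordK // eqxx mulr1.
    rewrite !mxE hi; case: eqP => [ki|]; last by rewrite mulr0 mul0r.
    by case/eqP: hk; apply/val_inj; rewrite /= inordK.
  by rewrite big1 ?subr0 // => k _; rewrite !mxE hi mul0r.
have trig : is_trig_mx (1%:M - N)^T.
  apply/is_trig_mxP => i j lij; rewrite !mxE -val_eqE /= gtn_eqF // sub0r.
  by case: ifP => _; rewrite ?oppr0 // (ltn_eqF (leqW lij)) mulr0 oppr0.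
rewrite det_mulmx -det_tr det_trig // big1 ?mul1r // => i _; rewrite !mxE eqxx.
by case: ifP => _; rewrite ?subr0 // ltn_eqF ?mulr0 ?subr0.
Qed.

Lemma det_col_max n (A : 'M[R]_n.+1) :
  (forall i, i != ord_max -> A i ord_max = 0) ->
  \det A = A ord_max ord_max * \det (row' ord_max (col' ord_max A)).
Proof.
move=> A0; rewrite (expand_det_col _ ord_max) (bigD1 ord_max) //= big1 ?addr0.
  by rewrite /cofactor -signr_odd addnn odd_double mul1r.
by move=> i /A0 ->; rewrite mul0r.
Qed.

End Determinants.

Definition vdm (R : nzRingType) (m : nat) (x : nat -> R) : R :=
  \prod_(i < m) \prod_(j < m | (i < j)%N) (x i - x j).

Lemma vdm_recr (R : comNzRingType) m (x : nat -> R) :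
  vdm m.+1 x = vdm m x * \prod_(i < m) (x i - x m).
Proof.
rewrite /vdm big_ord_recr /= [X in _ * X]big1 => [|j]; last first.
  by rewrite ltnNge -ltnS ltn_ord.
rewrite mulr1 -big_split /=; apply: eq_bigr => i _.
by rewrite big_mkcond big_ord_recr /= ltn_ord -big_mkcond.
Qed.

Lemma vdm_set_last (R : comNzRingType) m (x : nat -> R) c :
  vdm m.+1 (fun j => if j == m then c else x j) = vdm m x * \prod_(i < m) (x i - c).
Proof.
rewrite vdm_recr eqxx; congr (_ * _); last by apply: eq_bigr => i _; rewrite ltn_eqF.
by apply: eq_bigr => i _; apply: eq_bigr => j _; rewrite !ltn_eqF.
Qed.

Definition add_staircase (m : nat) (nu : seq nat) (i : nat) : nat :=
  (nth 0 nu i + (m - i.+1))%N.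

Definition sub_staircase (m : nat) (g : nat -> nat) : seq nat :=
  mkseq (fun i => g i - (m - i.+1))%N m.

Definition strictly_decreasing (m : nat) (g : nat -> nat) : Prop :=
  forall i, (i.+1 < m)%N -> (g i.+1 < g i)%N.

Lemma add_staircase_decreasing m nu :
  is_partition m nu -> strictly_decreasing m (add_staircase m nu).
Proof.
case/andP => /eqP sz /(sortedP 0%N) srt i lt_i1m.
by have := srt i; rewrite sz /add_staircase => /(_ lt_i1m) /=; lia.
Qed.

Lemma strictly_decreasing_ge m g :
  strictly_decreasing m g -> forall i, (i < m)%N -> (m - i.+1 <= g i)%N.
Proof.
move=> gdec i; have [k ek] := ubnP (m - i); elim: k i ek => // k IHk i ik im.
case: (ltnP i.+1 m) => [i1m|]; last by lia.
by have := IHk i.+1 ltac:(lia) i1m; have := gdec i i1m; lia.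
Qed.

Lemma sub_staircase_partition m g :
  strictly_decreasing m g -> is_partition m (sub_staircase m g).
Proof.
move=> gdec; rewrite /is_partition size_mkseq eqxx.
apply/(sortedP 0%N) => i; rewrite size_mkseq => i1m.
rewrite !nth_mkseq ?(ltnW i1m) //.
by have := gdec i i1m; have := strictly_decreasing_ge gdec i1m; lia.
Qed.

Lemma add_sub_staircase m g i :
  strictly_decreasing m g -> (i < m)%N -> add_staircase m (sub_staircase m g) i = g i.
Proof.
move=> gdec im; rewrite /add_staircase nth_mkseq //.
by have := strictly_decreasing_ge gdec im; lia.
Qed.

Section JacobiDifference.
Variable R : realType.
Variables a b : R.
Hypotheses (ha : -1 < a) (hb : -1 < b).

Definition jacobi_norm (l : nat) : R := poch (a + 1) l / (l`!)%:R.

Definition hyp_coef (l k : nat) : R :=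
  (poch (- (l%:R)) k * poch (l%:R + a + b + 1) k) / (poch (a + 1) k * (k`!)%:R).

Definition hyp (l : nat) (x : R) : R :=
  \sum_(k < l.+1) hyp_coef l k * ((1 - x) / 2) ^+ k.

Lemma jacobiE l x : jacobi a b l x = jacobi_norm l * hyp l x.
Proof. by []. Qed.

(* The constants of the Christoffel-Darboux formula at y = 1 in the
   normalisation F_l = p_l / p_l(1) = hyp l; the formula is [hyp_diff]. *)
Definition cd_scale (m : nat) : R :=
  (2 * m%:R + a + b + 2) * (m`!)%:R * poch (b + 1) m /
  (2 * poch (a + 1) m.+1 * poch (a + b + 2) m).

Definition cd_weight (k : nat) : R :=
  (if k is j.+1 then poch (a + b + 2) j * (a + b + 1 + 2 * k%:R) else 1) *
  poch (a + 1) k / (poch (b + 1) k * (k`!)%:R).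

Definition cd_kernel (m : nat) (x : R) : R := \sum_(k < m.+1) cd_weight k * hyp k x.

Let a1_gt0 : 0 < a + 1. Proof. have := ha; lra. Qed.
Let b1_gt0 : 0 < b + 1. Proof. have := hb; lra. Qed.
Let ab2_gt0 : 0 < a + b + 2. Proof. have := ha; have := hb; lra. Qed.

Lemma jacobi_norm_gt0 l : 0 < jacobi_norm l.
Proof. by rewrite divr_gt0 ?poch_gt0 ?ltr0n ?fact_gt0. Qed.

Lemma cd_scale_gt0 m : 0 < cd_scale m.
Proof.
have m0 := ler0n R m.
by rewrite divr_gt0 ?mulr_gt0 ?poch_gt0 ?ltr0n ?fact_gt0 //; move: ab2_gt0 m0; lra.
Qed.

Lemma cd_weight_gt0 k : 0 < cd_weight k.
Proof.
rewrite divr_gt0 ?mulr_gt0 ?poch_gt0 ?ltr0n ?fact_gt0 //.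
case: k => [|j]; rewrite ?ltr01 // mulr_gt0 ?poch_gt0 //.
have j0 := ler0n R j; rewrite -addn1 natrD; move: ab2_gt0 j0; lra.
Qed.

Lemma hyp_coef0 l : hyp_coef l 0 = 1.
Proof. by rewrite /hyp_coef !poch0 !mul1r invr1. Qed.

Lemma hyp_coef_eq0 l k : (l < k)%N -> hyp_coef l k = 0.
Proof. by move=> lk; rewrite /hyp_coef poch_Nnat // !mul0r. Qed.

Lemma hyp1 l : hyp l 1 = 1.
Proof.
rewrite /hyp big_ord_recl hyp_coef0 subrr mul0r expr0 mulr1 big1 ?addr0 // => k _.
by rewrite expr0n mulr0.
Qed.

Lemma jacobi_at1 l : jacobi a b l 1 = jacobi_norm l.
Proof. by rewrite jacobiE hyp1 mulr1. Qed.

Lemma hyp_widen l K x : (l < K)%N ->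
  hyp l x = \sum_(k < K) hyp_coef l k * ((1 - x) / 2) ^+ k.
Proof.
move=> lK; rewrite /hyp -!(big_mkord xpredT (fun k => hyp_coef l k * ((1 - x) / 2) ^+ k)).
rewrite [RHS](big_cat_nat _ (n := l.+1)) //= -[LHS]addr0; congr (_ + _).
by rewrite big_nat_cond big1 // => k /andP[/andP[lk _] _]; rewrite hyp_coef_eq0 // mul0r.
Qed.

Ltac nonzero_factors m j :=
  have := ler0n R m; have := ler0n R j; move: ha hb => ? ? ? ?;
  repeat (apply/andP; split);
  apply: lt0r_neq0;
  first [ by rewrite ltr0n fact_gt0 | apply: poch_gt0; lra | lra ].

Lemma hyp_coef_rec m k :
  hyp_coef m.+2 k.+1 - hyp_coef m.+1 k.+1 =
  cd_scale m.+1 / cd_scale m * (hyp_coef m.+1 k.+1 - hyp_coef m k.+1)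
  - 2 * cd_scale m.+1 * cd_weight m.+1 * hyp_coef m.+1 k.
Proof.
rewrite /cd_scale /cd_weight /hyp_coef; case: k => [|j].
  by rewrite !poch1 !poch0 !pochS !factS fact0 !natrM; field; nonzero_factors m m.
(* Reduce all Pochhammer symbols to the bases [- m] and [m + a + b + 3], so
   that what remains is an identity of rational functions. *)
rewrite (@pochSl _ (- (m.+1)%:R) (- m%:R) j.+1); last by ring.
rewrite (@pochSl _ (- (m.+2)%:R) (- (m.+1)%:R) j.+1); last by ring.
rewrite (@pochSl _ (- (m.+1)%:R) (- m%:R) j); last by ring.
rewrite (@pochSl _ ((m.+1)%:R + a + b + 1) ((m.+2)%:R + a + b + 1) j.+1); last by ring.
rewrite (@pochSl _ (m%:R + a + b + 1) ((m.+1)%:R + a + b + 1) j.+1); last by ring.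
rewrite (@pochSl _ ((m.+1)%:R + a + b + 1) ((m.+2)%:R + a + b + 1) j); last by ring.
by rewrite !pochS !factS !natrM; field; nonzero_factors m j.
Qed.

Lemma hyp_rec m x :
  hyp m.+2 x - hyp m.+1 x =
  cd_scale m.+1 / cd_scale m * (hyp m.+1 x - hyp m x)
  + (x - 1) * (cd_scale m.+1 * cd_weight m.+1 * hyp m.+1 x).
Proof.
pose t := (1 - x) / 2; pose S l := \sum_(k < m.+2) hyp_coef l k.+1 * t ^+ k.+1.
have hypE l : (l <= m.+2)%N -> hyp l x = 1 + S l.
  by move=> lm; rewrite (@hyp_widen _ m.+3) // big_ord_recl hyp_coef0 expr0 mulr1.
have xhypE : (x - 1) * hyp m.+1 x = - 2 * \sum_(k < m.+2) hyp_coef m.+1 k * t ^+ k.+1.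
  by rewrite /hyp !mulr_sumr; apply: eq_bigr => k _; rewrite exprS /t; field.
have S2E : S m.+2 = S m.+1 + cd_scale m.+1 / cd_scale m * (S m.+1 - S m)
    - 2 * cd_scale m.+1 * cd_weight m.+1 * \sum_(k < m.+2) hyp_coef m.+1 k * t ^+ k.+1.
  rewrite /S /= -sumrB !mulr_sumr -big_split -sumrB /=; apply: eq_bigr => k _.
  by rewrite -[hyp_coef m.+2 k.+1](subrK (hyp_coef m.+1 k.+1)) hyp_coef_rec; ring.
rewrite mulrCA xhypE !hypE ?(leqW (leqnSn m)) // S2E; ring.
Qed.

Lemma hyp_diff m x : hyp m.+1 x - hyp m x = (x - 1) * (cd_scale m * cd_kernel m x).
Proof.
elim: m => [|m IHm].
  rewrite /cd_kernel /cd_scale /cd_weight /hyp /hyp_coef !big_ord_recl !big_ord0.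
  by rewrite !poch1 !poch0 /=; field; rewrite fact0 oner_neq0 (lt0r_neq0 a1_gt0).
have -> : cd_kernel m.+1 x = cd_kernel m x + cd_weight m.+1 * hyp m.+1 x.
  by rewrite /cd_kernel big_ord_recr.
by rewrite (hyp_rec m x) IHm; field; apply/lt0r_neq0/cd_scale_gt0.
Qed.

Lemma hyp_sub lo hi x : (lo <= hi)%N ->
  hyp hi x - hyp lo x =
  (x - 1) * \sum_(lo <= k < hi) cd_scale k * cd_kernel k x.
Proof.
move=> lohi; rewrite -(telescope_sumr (fun k => hyp k x)) // mulr_sumr.
by apply: eq_bigr => k _; rewrite hyp_diff.
Qed.

Lemma jacobi_sub_ratio lo hi x : (lo <= hi)%N ->
  jacobi a b hi x - jacobi_norm hi / jacobi_norm lo * jacobi a b lo x =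
  jacobi_norm hi * ((x - 1) * \sum_(lo <= k < hi) cd_scale k * cd_kernel k x).
Proof.
move=> lohi; rewrite -hyp_sub // !jacobiE.
by field; apply/lt0r_neq0/jacobi_norm_gt0.
Qed.

Lemma cd_kernel_sub lo hi x : (lo <= hi)%N ->
  cd_kernel hi x - cd_kernel lo x =
  \sum_(lo.+1 <= k < hi.+1) cd_weight k * hyp k x.
Proof.
move=> lohi; rewrite /cd_kernel -!(big_mkord xpredT (fun k => cd_weight k * hyp k x)).
by rewrite (big_cat_nat _ (n := lo.+1)) //= [LHS]addrC addKr.
Qed.

End JacobiDifference.

Section JacobiPositive.
Variables (R : realType) (a b : R) (m : nat).

(* The terms are (coefficient, partition) pairs and may repeat, so that sums
   are concatenations; [jacobi_positive_uniq] merges the repetitions. *)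
Definition jacobi_positive (F : (nat -> R) -> R) : Prop :=
  exists r : seq (R * seq nat),
    all (fun p => (0 <= p.1) && is_partition m p.2) r /\
    forall x, F x = \sum_(p <- r) p.1 * multiJacobi a b m p.2 x.

Lemma jacobi_positive_multiJacobi nu :
  is_partition m nu -> jacobi_positive (multiJacobi a b m nu).
Proof.
move=> nup; exists [:: (1, nu)]; rewrite /= nup ler01.
by split=> // x; rewrite big_seq1 mul1r.
Qed.

Lemma jacobi_positive_eq F G :
  F =1 G -> jacobi_positive F -> jacobi_positive G.
Proof. by move=> FG [r [rpos FE]]; exists r; split=> // x; rewrite -FG. Qed.

Lemma jacobi_positive0 : jacobi_positive (fun=> 0).
Proof. by exists [::]; split=> // x; rewrite big_nil. Qed.

Lemma jacobi_positiveD F G :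
  jacobi_positive F -> jacobi_positive G -> jacobi_positive (fun x => F x + G x).
Proof.
move=> [r [rpos FE]] [r' [rpos' GE]]; exists (r ++ r').
by rewrite all_cat rpos rpos'; split=> // x; rewrite FE GE big_cat.
Qed.

Lemma jacobi_positiveZ c F :
  0 <= c -> jacobi_positive F -> jacobi_positive (fun x => c * F x).
Proof.
move=> c0 [r [rpos FE]]; exists [seq (c * p.1, p.2) | p <- r]; split.
  by rewrite all_map; apply/allP => p /(allP rpos) /andP[p0 pp] /=; rewrite mulr_ge0.
by move=> x; rewrite FE big_map mulr_sumr; apply: eq_bigr => p _; rewrite mulrA.
Qed.

Lemma jacobi_positive_sum (I : Type) (s : seq I) (c : I -> R) (F : I -> (nat -> R) -> R) :
  (forall i, 0 <= c i) -> (forall i, c i != 0 -> jacobi_positive (F i)) ->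
  jacobi_positive (fun x => \sum_(i <- s) c i * F i x).
Proof.
move=> c0 Fpos; elim: s => [|i s IHs].
  by apply: jacobi_positive_eq jacobi_positive0 => x; rewrite big_nil.
apply: (jacobi_positive_eq (F := fun x => c i * F i x + \sum_(j <- s) c j * F j x)).
  by move=> x; rewrite big_cons.
apply: jacobi_positiveD IHs; have [->|ci0] := eqVneq (c i) 0.
  by apply: jacobi_positive_eq jacobi_positive0 => x; rewrite mul0r.
exact: jacobi_positiveZ (c0 i) (Fpos i ci0).
Qed.

Lemma jacobi_positive_uniq F : jacobi_positive F ->
  exists (s : seq (seq nat)) (c : seq nat -> R),
    [/\ uniq s, all (is_partition m) s, (forall nu, nu \in s -> 0 <= c nu) &
        forall x, F x = \sum_(nu <- s) c nu * multiJacobi a b m nu x].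
Proof.
move=> [r [rpos FE]].
exists (undup [seq p.2 | p <- r]), (fun nu => \sum_(p <- r | p.2 == nu) p.1).
split=> [||nu _|x]; first exact: undup_uniq.
- by apply/allP => nu; rewrite mem_undup => /mapP[p /(allP rpos) /andP[_ pp] ->].
- by rewrite big_seq_cond; apply: sumr_ge0 => p /andP[/(allP rpos) /andP[]].
- by rewrite FE (sum_group_by _ (fun nu => multiJacobi a b m nu x)).
Qed.

Lemma multiJacobiE nu x : multiJacobi a b m nu x =
  \det (\matrix_(i < m, j < m) jacobi a b (add_staircase m nu i) (x j)) / vdm m x.
Proof. by []. Qed.

Lemma jacobi_positive_det_jacobi g : strictly_decreasing m g ->
  jacobi_positive (fun x => \det (\matrix_(i < m, j < m) jacobi a b (g i) (x j)) / vdm m x).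
Proof.
move=> gdec.
apply: jacobi_positive_eq (jacobi_positive_multiJacobi (sub_staircase_partition gdec)).
move=> x; rewrite multiJacobiE; congr (\det _ / _); apply/matrixP => i j.
by rewrite !mxE add_sub_staircase.
Qed.

Lemma jacobi_positive_det_mulmx K (W : 'M[R]_(m, K)) (G : (nat -> R) -> 'M[R]_(K, m)) :
  (forall i k, 0 <= W i k) ->
  (forall f : {ffun 'I_m -> 'I_K}, (forall i, W i (f i) != 0) ->
     jacobi_positive (fun x => \det (rowsub f (G x)) / vdm m x)) ->
  jacobi_positive (fun x => \det (W *m G x) / vdm m x).
Proof.
move=> W0 Wpos.
apply: (jacobi_positive_eq (F := fun x => \sum_(f : {ffun 'I_m -> 'I_K})
    (\prod_i W i (f i)) * (\det (rowsub f (G x)) / vdm m x))).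
  by move=> x; rewrite det_mulmx_ffun mulr_suml; apply: eq_bigr => f _; rewrite mulrA.
apply: jacobi_positive_sum => [f|f /prodf_neq0 Wf]; first exact: prodr_ge0.
by apply: Wpos => i; apply: Wf.
Qed.

End JacobiPositive.

Section KernelDeterminants.
Variable R : realType.
Variables a b : R.
Hypotheses (ha : -1 < a) (hb : -1 < b).

Lemma jacobi_positive_det_cd_kernel m (f : nat -> nat) :
  strictly_decreasing m.+1 f ->
  jacobi_positive a b m.+1 (fun x =>
    \det (\matrix_(i < m.+1, j < m.+1) cd_kernel a b (f i) (x j)) / vdm m.+1 x).
Proof.
move=> fdec; pose K := (\max_(i < m.+1) f i).+1.
have fK (i : 'I_m.+1) : (f i < K)%N by rewrite ltnS (leq_bigmax_cond i).
pose W : 'M[R]_(m.+1, K) := \matrix_(i, k) (cd_weight a b k *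
  ((if (i.+1 < m.+1)%N then (f i.+1 < k)%N else true) && (k <= f i)%N)%:R).
pose G (x : nat -> R) : 'M[R]_(K, m.+1) := \matrix_(k, j) hyp a b k (x j).
apply: (jacobi_positive_eq (F := fun x => \det (W *m G x) / vdm m.+1 x)).
  move=> x; rewrite -[in RHS](det_sub_next_rows _ (fun=> 1)); congr (\det _ / _).
  apply/matrixP => i j; rewrite !mxE; case: ifP => i1m.
    rewrite (inordK i1m) (mul1r (cd_kernel a b (f i.+1) (x j))).
    rewrite (cd_kernel_sub a b _ (ltnW (fdec i i1m))).
    rewrite (big_nat_ord_indicator _ _ (fK i)); apply: eq_bigr => k _.
    by rewrite !mxE i1m ltnS mulrCA mulrA.
  rewrite /cd_kernel -(big_mkord xpredT (fun k => cd_weight a b k * hyp a b k (x j))).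
  rewrite (big_nat_ord_indicator _ _ (fK i)); apply: eq_bigr => k _.
  by rewrite !mxE i1m ltnS mulrCA mulrA.
apply: (@jacobi_positive_det_mulmx _ a b m.+1 K W G) => [i k|g Wg].
  by rewrite mxE mulr_ge0 ?ler0n ?ltW ?cd_weight_gt0.
have gbound (i : 'I_m.+1) :
    ((if (i.+1 < m.+1)%N then (f i.+1 < g i)%N else true) && (g i <= f i)%N).
  by move: (Wg i); rewrite mxE mulf_eq0 negb_or pnatr_eq0 eqb0 negbK => /andP[].
have gdec : strictly_decreasing m.+1 (fun i => g (inord i)).
  move=> i i1m; have := gbound (inord i.+1); have := gbound (inord i).
  rewrite (inordK i1m) (inordK (ltnW i1m)) i1m => /andP[fg _] /andP[_ gf].
  exact: leq_ltn_trans gf fg.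
apply: (jacobi_positive_eq (F := fun x => (\prod_i (jacobi_norm a (g i))^-1) *
  (\det (\matrix_(i < m.+1, j < m.+1) jacobi a b (g (inord i)) (x j)) / vdm m.+1 x))).
  move=> x; rewrite mulrA -det_scale_rows; congr (\det _ / _).
  apply/matrixP => i j; rewrite !mxE inord_val jacobiE mulKf //.
  exact/lt0r_neq0/jacobi_norm_gt0.
apply: jacobi_positiveZ _ (jacobi_positive_det_jacobi a b gdec).
by apply: prodr_ge0 => i _; rewrite invr_ge0 ltW ?jacobi_norm_gt0.
Qed.

End KernelDeterminants.

Section LastVariableAtOne.
Variable R : realType.
Variables (a b : R) (m : nat) (lam : seq nat).
Hypotheses (ha : -1 < a) (hb : -1 < b) (hlam : is_partition m.+2 lam).

Let L := add_staircase m.+2 lam.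
Let K := (\max_(i < m.+2) L i).+1.

Let LK i : (i < m.+2)%N -> (L i < K)%N.
Proof. by move=> im; rewrite ltnS (leq_bigmax_cond (Ordinal im)). Qed.

Let W : 'M[R]_(m.+1, K) :=
  \matrix_(i, k) (jacobi_norm a (L i) * ((L i.+1 <= k) && (k < L i))%N%:R).

Let G (x : nat -> R) : 'M[R]_(K, m.+1) :=
  \matrix_(k, j) (cd_scale a b k * cd_kernel a b k (x j)).

Lemma det_jacobi_last_at1 (y : nat -> R) : y m.+1 = 1 ->
  \det (\matrix_(i < m.+2, j < m.+2) jacobi a b (L i) (y j)) =
  jacobi_norm a (L m.+1) * ((\prod_(j < m.+1) (y j - 1)) * \det (W *m G y)).
Proof.
move=> y1; have Ldec : strictly_decreasing m.+2 L by apply: add_staircase_decreasing.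
rewrite -(det_sub_next_rows _ (fun i => jacobi_norm a (L i) / jacobi_norm a (L i.+1))).
rewrite det_col_max => [|i ni]; last first.
  have i1m : (i.+1 < m.+2)%N by rewrite ltn_neqAle -?val_eqE ltn_ord andbT.
  rewrite !mxE i1m (inordK i1m) y1 !jacobi_at1 divfK ?subrr //.
  exact/lt0r_neq0/jacobi_norm_gt0.
rewrite !mxE ltnn y1 jacobi_at1 -det_scale_cols; congr (_ * \det _).
apply/matrixP => i j; have i1 : (i.+1 < m.+2)%N by rewrite ltnS.
rewrite !mxE !lift_max i1 (inordK i1) (jacobi_sub_ratio ha hb _ (ltnW (Ldec i i1))).
rewrite (big_nat_ord_indicator _ _ (ltnW (LK (ltnW i1)))) mulrCA mulr_sumr.
by apply: congr1; apply: eq_bigr => k _; rewrite !mxE -mulrA.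
Qed.

Lemma multiJacobi_last_at1 x : (forall i, (i < m.+1)%N -> x i != 1) ->
  multiJacobi a b m.+2 lam (fun j => if j == m.+1 then 1 else x j) =
  jacobi_norm a (L m.+1) * (\det (W *m G x) / vdm m.+1 x).
Proof.
move=> x1; rewrite multiJacobiE -/L vdm_set_last.
rewrite (det_jacobi_last_at1 (y := fun j => if j == m.+1 then 1 else x j)) /= ?eqxx //.
have -> : G (fun j => if j == m.+1 then 1 else x j) = G x.
  by apply/matrixP => k j; rewrite !mxE ltn_eqF.
rewrite (eq_bigr (fun j : 'I_m.+1 => x j - 1)) => [|j _]; last by rewrite ltn_eqF.
have P0 : \prod_(i < m.+1) (x i - 1) != 0.
  by apply/prodf_neq0 => i _; rewrite subr_eq0 x1.
have [->|V0] := eqVneq (vdm m.+1 x) 0; first by rewrite !(mul0r, invr0, mulr0).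
by field; rewrite V0 P0.
Qed.

Lemma jacobi_positive_last_at1 :
  jacobi_positive a b m.+1 (fun x => jacobi_norm a (L m.+1) * (\det (W *m G x) / vdm m.+1 x)).
Proof.
apply: jacobi_positiveZ; first exact/ltW/jacobi_norm_gt0.
apply: jacobi_positive_det_mulmx => [i k|f Wf].
  by rewrite mxE mulr_ge0 ?ler0n ?ltW ?jacobi_norm_gt0.
have fbound (i : 'I_m.+1) : (L i.+1 <= f i < L i)%N.
  by move: (Wf i); rewrite mxE mulf_eq0 negb_or pnatr_eq0 eqb0 negbK => /andP[].
have fdec : strictly_decreasing m.+1 (fun i => f (inord i)).
  move=> i i1m; have /andP[_ fL] := fbound (inord i.+1).
  have /andP[Lf _] := fbound (inord i).
  by rewrite (inordK i1m) in fL; rewrite (inordK (ltnW i1m)) in Lf; apply: leq_trans Lf.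
apply: (jacobi_positive_eq (F := fun x => (\prod_i cd_scale a b (f i)) *
  (\det (\matrix_(i < m.+1, j < m.+1) cd_kernel a b (f (inord i)) (x j)) / vdm m.+1 x))).
  move=> x; rewrite mulrA -det_scale_rows; congr (\det _ / _).
  by apply/matrixP => i j; rewrite !mxE inord_val.
apply: jacobi_positiveZ _ (jacobi_positive_det_cd_kernel ha hb fdec).
by apply: prodr_ge0 => i _; apply/ltW/cd_scale_gt0.
Qed.

End LastVariableAtOne.

Theorem proposition7p5 (R : realType) (a b : R) (n : nat) (lam : seq nat) :
  -1 < a -> -1 < b -> (2 <= n)%N -> is_partition n lam ->
  exists (s : seq (seq nat)) (c : seq nat -> R),
    [/\ uniq s, all (is_partition n.-1) s,
        (forall nu, nu \in s -> 0 <= c nu) &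
        forall x : nat -> R,
          (forall i j, (i < n.-1)%N -> (j < n.-1)%N -> i != j -> x i != x j) ->
          (forall i, (i < n.-1)%N -> x i != 1) ->
          multiJacobi a b n lam (fun j => if j == n.-1 then 1 else x j)
          = \sum_(nu <- s) c nu * multiJacobi a b n.-1 nu x].
Proof.
move=> ha hb; case: n lam => [|[|m]] // lam _ hlam.
have [s [c [suniq spart c_ge0 cE]]] :=
  jacobi_positive_uniq (jacobi_positive_last_at1 m lam ha hb).
exists s, c; split=> // x _ x1.
by rewrite multiJacobi_last_at1 // cE.
Qed.
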